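(* For every positive integer $n$ there exists a positive integer $x$ such that the entry in row $x$, column $x-1$ of $T_2$ equals $n$. In particular every positive integer appears as an entry of $T_2$, and the sequence $a_2(n)=\min\{x\in\mathbb{N}: T_2(x,x-1)=n\}$ is defined for all positive integers $n$.
   Context: For a positive integer $m$, the triangle $T_m$ is an array whose row $x$ ($x=1,2,\dots$) has $x$ entries, in columns $0,\dots,x-1$. Row $1$ is the single entry $1$. For $x>1$, row $x$ is obtained from row $x-1$ by rotating it cyclically left by $m$ positions (the entry in column $c$ of row $x-1$ moves to column $(c-m)\bmod(x-1)\in\{0,\dots,x-2\}$ of row $x$), then appending in column $x-1$ a new entry equal to $1$ plus the entry in column $0$ of row $x-1$. $T_m(x,c)$ denotes the entry in row $x$, column $c$. Here $m=2$. *)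

From mathcomp Require Import all_boot.
Set Implicit Arguments. Unset Strict Implicit. Unset Printing Implicit Defensive.

(* The triangle T_m.  [Trow m k] is row k+1 of T_m, as a sequence of length k+1
   (columns 0..k). *)
Fixpoint Trow (m k : nat) : seq nat :=
  match k with
  | 0 => [:: 1]
  | k'.+1 =>
      let r := Trow m k' in
      rcons (rot (m %% k'.+1) r) (1 + nth 0 r 0)
  end.

Definition T (m x c : nat) : nat := nth 0 (Trow m x.-1) c.

From mathcomp Require Import all_boot.
From mathcomp Require Import zify.

(* For m = 2 an entry of a row of length k.+1 in column c >= 2 moves to column
   c - 2 of the next row, so after c./2 steps it sits in column 0 or 1.  An
   entry in column 1 wraps around to the last column k, and after k./2 further
   steps reaches column 0 if k is even, or column 1 of a row of length
   3 (k.+1) / 2 if k is odd; since the 2-adic valuation of the row length drops,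
   every entry eventually heads a row.  The diagonal entry of the next row is
   that head plus one, so all positive integers appear on the diagonal. *)

Lemma nth_rot (T : Type) (x0 : T) (s : seq T) n i :
  n <= size s -> i < size s -> nth x0 (rot n s) i = nth x0 s ((i + n) %% size s).
Proof.
move=> le_n_s lt_i_s; rewrite /rot nth_cat size_drop.
case: ltnP => [lt_i | le_i].
  by rewrite nth_drop modn_small 1?addnC //; lia.
rewrite nth_take; last lia.
have wrap : i + n = (i + n - size s) + size s by lia.
by rewrite wrap modnDr modn_small; [congr nth; lia | lia].
Qed.

Lemma size_Trow m k : size (Trow m k) = k.+1.
Proof. by elim: k => //= k IH; rewrite size_rcons size_rot IH. Qed.

Lemma nth_TrowS m k i : i <= k ->
  nth 0 (Trow m k.+1) i = nth 0 (Trow m k) ((i + m) %% k.+1).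
Proof.
move=> le_i_k /=; rewrite nth_rcons size_rot size_Trow ltnS le_i_k.
rewrite nth_rot size_Trow ?modnDmr //; first exact/ltnW/ltn_pmod.
Qed.

Lemma T_diagS m k : T m k.+2 k.+1 = (T m k.+1 0).+1.
Proof.
by rewrite /T /= nth_rcons size_rot size_Trow ltnn eqxx add1n.
Qed.

Lemma nth_Trow2S k i : i.+2 <= k ->
  nth 0 (Trow 2 k.+1) i = nth 0 (Trow 2 k) i.+2.
Proof. by move=> lt_i_k; rewrite nth_TrowS ?addn2 ?modn_small //; lia. Qed.

Lemma nth_Trow2S_last k : 0 < k -> nth 0 (Trow 2 k.+1) k = nth 0 (Trow 2 k) 1.
Proof.
move=> k_gt0; rewrite nth_TrowS // (_ : k + 2 = 1 + k.+1) ?modnDr ?modn_small //.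
by rewrite add1n addn2.
Qed.

Lemma nth_Trow2_addn k j c : c + j.*2 <= k ->
  nth 0 (Trow 2 (k + j)) c = nth 0 (Trow 2 k) (c + j.*2).
Proof.
elim: j k => [|j IH] k le_k; first by rewrite double0 !addn0.
rewrite addnS -addSn IH; last lia.
by rewrite nth_Trow2S; [congr nth; lia | lia].
Qed.

Lemma nth_Trow2_half k c : c <= k ->
  nth 0 (Trow 2 (k + c./2)) (odd c) = nth 0 (Trow 2 k) c.
Proof. by move=> le_c_k; rewrite nth_Trow2_addn odd_double_half. Qed.

Definition heads_row (v : nat) : Prop := exists k, nth 0 (Trow 2 k) 0 = v.

Lemma heads_row_col1 a k : 0 < k -> ~~ (2 ^ a %| k.+1) ->
  heads_row (nth 0 (Trow 2 k) 1).
Proof.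
elim: a k => [|a IH] k k_gt0 ndvd_k; first by rewrite expn0 dvd1n in ndvd_k.
rewrite -nth_Trow2S_last // -nth_Trow2_half //.
case odd_k: (odd k); last by eexists.
have row_len : (k.+1 + k./2).+1 * 2 = 3 * k.+1.
  by rewrite -[in RHS](odd_double_half k) odd_k; lia.
apply: IH; first lia.
apply: contra ndvd_k => dvd_k'.
have : 2 ^ a.+1 %| 3 * k.+1 by rewrite -row_len expnSr dvdn_pmul2r.
by rewrite Gauss_dvdr // coprime_sym coprimeXr.
Qed.

Lemma heads_row_nth_Trow2 k c : c <= k -> heads_row (nth 0 (Trow 2 k) c).
Proof.
move=> le_c_k; rewrite -nth_Trow2_half //.
case odd_c: (odd c); last by eexists.
apply: (heads_row_col1 (k + c./2).+1).
  by case: c odd_c le_c_k => //; lia.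
by apply/negP => /(dvdn_leq (ltn0Sn _)); rewrite leqNgt ltn_expl.
Qed.

Theorem mainTheorem6 :
  forall n : nat, 0 < n -> exists x : nat, 0 < x /\ T 2 x (x - 1) = n.
Proof.
elim => [//|[|n] IH] _; first by exists 1.
have [x [x_gt0 <-]] := IH isT.
have [k head_k] : heads_row (T 2 x (x - 1)) by apply: heads_row_nth_Trow2; rewrite subn1.
exists k.+2; split => //.
by rewrite subn1 T_diagS /T head_k subn1.
Qed.
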